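(* Let $m,n$ be positive integers and let $\{(A_i,\boldsymbol{\gamma}_i)\}_{i=1}^\infty\subset\left([0,1)^{m\times n}\times[0,1)^m\right)\setminus\mathbf{Bad}(m,n)$. Then $\bigcap_{i=1}^\infty\mathcal{C}(A_i,\boldsymbol{\gamma}_i)$ is of second category and dense in the metric space $(\mathcal{C},d)$.
   Context: $[0,1)^{m\times n}$ is the set of real $m\times n$ matrices with entries in $[0,1)$. For $\boldsymbol{x}\in\mathbb{R}^n$, $\|\boldsymbol{x}\|=\max_i|x_i|$; for $\boldsymbol{y}\in\mathbb{R}^m$, $\langle\boldsymbol{y}\rangle=\min_{\boldsymbol{p}\in\mathbb{Z}^m}\|\boldsymbol{y}-\boldsymbol{p}\|$. ''Decreasing'' means non-increasing. $\mathcal{C}$ is the set of decreasing $\psi:\mathbb{N}\to[0,\infty)$ with $\sum_{q\ge1}q^{n-1}\psi(q)^m<\infty$, equipped with the metric $d(\psi_1,\psi_2)=\sum_{q\ge1}q^{n-1}|\psi_1(q)^m-\psi_2(q)^m|$. $\mathcal{C}(A,\boldsymbol{\gamma})=\{\psi\in\mathcal{C}:\langle A\boldsymbol{q}-\boldsymbol{\gamma}\rangle<\psi(\|\boldsymbol{q}\|)\text{ for infinitely many }\boldsymbol{q}\in\mathbb{Z}^n\}$. $\mathbf{Bad}(m,n)=\{(A,\boldsymbol{\gamma}):\liminf_{\boldsymbol{q}\in\mathbb{Z}^n,\|\boldsymbol{q}\|\to\infty}\|\boldsymbol{q}\|^n\langle A\boldsymbol{q}-\boldsymbol{\gamma}\rangle^m>0\}$.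 *)

From HB Require Import structures.
From mathcomp Require Import all_boot all_order all_algebra.
From mathcomp Require Import all_classical all_reals all_analysis.
Set Implicit Arguments. Unset Strict Implicit. Unset Printing Implicit Defensive.
Import Order.TTheory GRing.Theory Num.Theory numFieldNormedType.Exports.
Local Open Scope classical_set_scope.
Local Open Scope ring_scope.

Section Defs.
Variable R : realType.

Definition supnormZ (n : nat) (q : 'cV[int]_n) : nat :=
  \max_(i < n) `|q i ord0|%N.

Definition supnormR (m : nat) (y : 'cV[R]_m) : R :=
  \big[Num.max/0]_(i < m) `|y i ord0|.

(* <y> = min_{p in Z^m} ||y - p||  (written as the infimum, which is attained) *)
Definition distZ (m : nat) (y : 'cV[R]_m) : R :=
  inf [set r : R | exists p : 'cV[int]_m,
         r = supnormR (y - map_mx (fun z : int => z%:~R) p)].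

Definition Aqg (m n : nat) (A : 'M[R]_(m, n)) (g : 'cV[R]_m) (q : 'cV[int]_n)
  : 'cV[R]_m := A *m map_mx (fun z : int => z%:~R) q - g.

Definition unit_mx (m n : nat) (A : 'M[R]_(m, n)) : Prop :=
  forall i j, 0 <= A i j < 1.

(* Functions psi : N = {1,2,...} -> [0,oo) are represented by
   psi' : nat -> R with psi' k = psi (k+1). *)
Definition psi_at (psi : nat -> R) (q : nat) : R := psi q.-1.

Definition classC (m n : nat) : set (nat -> R) :=
  [set psi : nat -> R | (forall k, 0 <= psi k) /\ (forall k, psi k.+1 <= psi k) /\
     cvgn (series (fun k : nat => (k.+1%:R) ^+ (n.-1) * psi k ^+ m))].

Definition dC (m n : nat) (psi1 psi2 : nat -> R) : R :=
  limn (series (fun k : nat =>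
    (k.+1%:R) ^+ (n.-1) * `|psi1 k ^+ m - psi2 k ^+ m|)).

Definition classCAg (m n : nat) (A : 'M[R]_(m, n)) (g : 'cV[R]_m)
  : set (nat -> R) :=
  [set psi : nat -> R | classC m n psi /\
     ~ finite_set [set q : 'cV[int]_n | q != 0 /\
         distZ (Aqg A g q) < psi_at psi (supnormZ q)]].

(* Bad(m,n):  liminf_{||q|| -> oo} ||q||^n <Aq - gamma>^m > 0 *)
Definition Bad (m n : nat) (A : 'M[R]_(m, n)) (g : 'cV[R]_m) : Prop :=
  exists c : R, 0 < c /\ exists N : nat, forall q : 'cV[int]_n,
    (N <= supnormZ q)%N ->
    c <= (supnormZ q)%:R ^+ n * distZ (Aqg A g q) ^+ m.

Definition closureC (m n : nat) (F : set (nat -> R)) : set (nat -> R) :=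
  [set x | classC m n x /\
     forall e : R, 0 < e -> exists y, F y /\ classC m n y /\ dC m n x y < e].

Definition interiorC (m n : nat) (G : set (nat -> R)) : set (nat -> R) :=
  [set x | classC m n x /\ exists e : R, 0 < e /\
     forall y, classC m n y -> dC m n x y < e -> G y].

Definition nowhere_denseC (m n : nat) (F : set (nat -> R)) : Prop :=
  F `<=` classC m n /\ interiorC m n (closureC m n F) = set0.

Definition meagerC (m n : nat) (S : set (nat -> R)) : Prop :=
  exists F : nat -> set (nat -> R),
    (forall k, nowhere_denseC m n (F k)) /\ S `<=` \bigcup_k F k.

Definition second_categoryC (m n : nat) (S : set (nat -> R)) : Prop :=
  ~ meagerC m n S.

Definition denseC (m n : nat) (S : set (nat -> R)) : Prop :=
  forall psi, classC m n psi -> forall e : R, 0 < e ->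
    exists phi, S phi /\ classC m n phi /\ dC m n psi phi < e.

End Defs.

From Pilot Require Import Defs.
From HB Require Import structures.
From mathcomp Require Import all_boot all_order all_algebra.
From mathcomp Require Import all_classical all_reals all_analysis.
From mathcomp Require Import lra.
Set Implicit Arguments. Unset Strict Implicit. Unset Printing Implicit Defensive.
Import Order.TTheory GRing.Theory Num.Theory numFieldNormedType.Exports.
Local Open Scope classical_set_scope.
Local Open Scope ring_scope.

(* (C, d) is a complete metric space: since |a - b|^m <= |a^m - b^m| for
   a, b >= 0, a d-Cauchy sequence converges pointwise, and bounds on partial
   sums put the pointwise limit back in C at the expected distance.  So Baire's
   theorem applies: a countable intersection of sets with dense interior is
   dense and of second category.
   For (A, gamma) and N, let U_N be the set of psi admitting q with ||q|| >= N
   and <Aq - gamma> < psi(||q||); every psi in C lying in all U_N belongs to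
   C(A, gamma).
   If (A, gamma) is not in Bad(m, n), some q with ||q|| = K >= N makes
   K^n <Aq - gamma>^m arbitrarily small.  Raising psi to a level t slightly
   above <Aq - gamma> on its first K values moves it by at most K^n t^m, and a
   whole ball around the raised function lies in U_N.  Hence every U_N has
   dense interior, and a diagonal enumeration of the pairs (i, N) finishes. *)

Section nonneg_series.
Context {R : realType}.
Implicit Types u : R ^nat.

Lemma nondecreasing_series_ge0 u :
  (forall k, 0 <= u k) -> nondecreasing_seq (series u).
Proof. by move=> u0 a b ab; apply: nondecreasing_series. Qed.

Lemma is_cvg_series_ge0_bounded u B :
  (forall k, 0 <= u k) -> (forall N, series u N <= B) -> cvgn (series u).
Proof.
move=> u0 uB; apply: nondecreasing_is_cvgn; first exact: nondecreasing_series_ge0.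
by exists B => _ [N _ <-].
Qed.

Lemma lim_series_ge0_le u B :
  (forall k, 0 <= u k) -> (forall N, series u N <= B) -> limn (series u) <= B.
Proof.
move=> u0 uB; apply: limr_le; first exact: is_cvg_series_ge0_bounded u0 uB.
exact: nearW.
Qed.

Lemma series_le_lim_ge0 u N :
  (forall k, 0 <= u k) -> cvgn (series u) -> series u N <= limn (series u).
Proof. by move=> u0 cu; apply: nondecreasing_cvgn_le => //; exact: nondecreasing_series_ge0. Qed.

Lemma term_le_lim_series_ge0 u j :
  (forall k, 0 <= u k) -> cvgn (series u) -> u j <= limn (series u).
Proof.
move=> u0 cu; apply: le_trans (series_le_lim_ge0 j.+1 u0 cu).
by rewrite /series /= big_nat_recr //= lerDr sumr_ge0.
Qed.

Lemma cvg_series_pointwise (f : nat -> R ^nat) (g : R ^nat) N :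
  (forall i, (fun l => f l i) @ \oo --> g i) ->
  (fun l => series (f l) N) @ \oo --> series g N.
Proof.
move=> fg; rewrite /series /=; apply: cvg_big => //.
exact: add_continuous.
Qed.

End nonneg_series.

Lemma exprn_normB_le (R : realDomainType) m (a b : R) : (0 < m)%N ->
  0 <= a -> 0 <= b -> `|a - b| ^+ m <= `|a ^+ m - b ^+ m|.
Proof.
move=> m0; wlog ba : a b / b <= a.
  move=> W a0 b0; have [ba|/ltW ab] := leP b a; first exact: W.
  by rewrite distrC [X in _ <= X]distrC; exact: W.
move=> a0 b0; rewrite !ger0_norm ?subr_ge0 ?lerXn2r //.
case: m m0 => // k _; rewrite subrXX big_ord_recl /= subn0 exprS ler_wpM2l ?subr_ge0 //.
rewrite expr0 mulr1 -[X in X <= _]addr0 lerD ?lerXn2r ?nnegrE ?subr_ge0 ?gerBl //.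
by rewrite sumr_ge0 // => i _; rewrite mulr_ge0 ?exprn_ge0.
Qed.

Section metric.
Context {R : realType}.
Variables m n : nat.
Implicit Types a b c : nat -> R.

Definition weight (j : nat) : R := j.+1%:R ^+ n.-1.

Definition mass a k : R := weight k * a k ^+ m.

Definition dC_term a b k : R := weight k * `|a k ^+ m - b k ^+ m|.

Lemma weight_ge1 j : 1 <= weight j.
Proof. by rewrite exprn_ege1 // ler1n. Qed.

Lemma weight_ge0 j : 0 <= weight j.
Proof. exact: le_trans ler01 (weight_ge1 j). Qed.

Lemma dC_term_ge0 a b k : 0 <= dC_term a b k.
Proof. by rewrite mulr_ge0 ?weight_ge0. Qed.

Lemma classC_ge0 a : classC m n a -> forall k, 0 <= a k.
Proof. by case. Qed.

Lemma classC_nonincr a : classC m n a -> forall k, a k.+1 <= a k.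
Proof. by case=> _ []. Qed.

Lemma is_cvg_classC_mass a : classC m n a -> cvgn (series (mass a)).
Proof. by case=> _ []. Qed.

Lemma mass_ge0 a : (forall k, 0 <= a k) -> forall k, 0 <= mass a k.
Proof. by move=> a0 k; rewrite mulr_ge0 ?weight_ge0 ?exprn_ge0. Qed.

Lemma mass_le_dC_term a b k : mass b k <= mass a k + dC_term a b k.
Proof. by rewrite -mulrDr ler_wpM2l ?weight_ge0 // -lerBlDl distrC ler_norm. Qed.

Lemma dC_term_le_mass a b k : (forall k, 0 <= a k) -> (forall k, 0 <= b k) ->
  dC_term a b k <= mass a k + mass b k.
Proof.
move=> a0 b0; rewrite -mulrDr ler_wpM2l ?weight_ge0 // (le_trans (ler_normB _ _)) //.
by rewrite !ger0_norm ?exprn_ge0.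
Qed.

Lemma classC_dC_bounded a b B : classC m n a ->
  (forall k, 0 <= b k) -> (forall k, b k.+1 <= b k) ->
  (forall N, series (dC_term a b) N <= B) -> classC m n b.
Proof.
move=> Ca b0 bdec bB; split=> //; split=> //.
apply: (is_cvg_series_ge0_bounded (B := limn (series (mass a)) + B) (mass_ge0 b0)).
move=> N; rewrite -[leLHS]/(\sum_(0 <= k < N) mass b k).
apply: le_trans (ler_sum _ (fun k _ => mass_le_dC_term a b k)) _.
rewrite big_split lerD ?bB //.
exact: series_le_lim_ge0 _ (mass_ge0 (classC_ge0 Ca)) (is_cvg_classC_mass Ca).
Qed.

Lemma is_cvg_dC a b : classC m n a -> classC m n b -> cvgn (series (dC_term a b)).
Proof.
move=> Ca Cb; have [a0 b0] := (classC_ge0 Ca, classC_ge0 Cb).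
apply: (is_cvg_series_ge0_bounded
  (B := limn (series (mass a)) + limn (series (mass b)))); first exact: dC_term_ge0.
move=> N; apply: le_trans (ler_sum _ (fun k _ => dC_term_le_mass k a0 b0)) _.
rewrite big_split lerD //; apply: series_le_lim_ge0 (is_cvg_classC_mass _) => //;
  exact: mass_ge0.
Qed.

Lemma series_le_dC a b N : classC m n a -> classC m n b ->
  series (dC_term a b) N <= dC m n a b.
Proof. by move=> Ca Cb; exact: series_le_lim_ge0 _ (dC_term_ge0 a b) (is_cvg_dC Ca Cb). Qed.

Lemma dC_le a b B : (forall N, series (dC_term a b) N <= B) -> dC m n a b <= B.
Proof. by apply: lim_series_ge0_le; exact: dC_term_ge0. Qed.

Lemma coord_le_dC a b j : classC m n a -> classC m n b ->
  `|a j ^+ m - b j ^+ m| <= dC m n a b.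
Proof.
move=> Ca Cb; apply: le_trans (term_le_lim_series_ge0 j (dC_term_ge0 a b) (is_cvg_dC Ca Cb)).
by rewrite /dC_term ler_peMl ?weight_ge1.
Qed.

Lemma dC_ge0 a b : classC m n a -> classC m n b -> 0 <= dC m n a b.
Proof. by move=> Ca Cb; apply: le_trans (coord_le_dC 0 Ca Cb). Qed.

Lemma dC_xx a : classC m n a -> dC m n a a = 0.
Proof.
move=> Ca; apply/eqP; rewrite eq_le dC_ge0 // andbT; apply: dC_le => N.
by rewrite /series /= big1 // => k _; rewrite /dC_term subrr normr0 mulr0.
Qed.

Lemma dC_triangle a b c : classC m n a -> classC m n b -> classC m n c ->
  dC m n a c <= dC m n a b + dC m n b c.
Proof.
move=> Ca Cb Cc; apply: dC_le => N.
apply: le_trans (lerD (series_le_dC N Ca Cb) (series_le_dC N Cb Cc)).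
rewrite /series /= -big_split /=; apply: ler_sum => k _.
by rewrite -mulrDr ler_wpM2l ?weight_ge0 // -(subrKA (b k ^+ m)) ler_normD.
Qed.

Hypothesis m_gt0 : (0 < m)%N.

Lemma classC0 : classC m n (fun=> 0 : R).
Proof.
have m0 : (0 : R) ^+ m = 0 by rewrite expr0n gtn_eqF.
split=> //; split=> //; apply: (@is_cvg_series_ge0_bounded _ _ 0) => [k|N].
  by rewrite m0 mulr0.
by rewrite /series /= big1 // => k _; rewrite m0 mulr0.
Qed.

Lemma cvgn_coord_dC_cauchy (x : nat -> nat -> R) (r : R ^nat) :
  (forall k, classC m n (x k)) -> r @ \oo --> 0 ->
  (forall k l, (k <= l)%N -> dC m n (x k) (x l) <= r k) ->
  forall j, cvgn (fun k => x k j).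
Proof.
move=> Cx r0 dx j; apply: cauchy_cvg; apply: cauchy_exP => e e0.
have [N _ rN] := cvgr_lt _ r0 _ (exprn_gt0 m e0).
exists (x N j); rewrite /fmapE -ball_normE /ball_; exists N => // k /= Nk.
rewrite -(ltr_pXn2r m_gt0) ?nnegrE ?(ltW e0) //.
apply: le_lt_trans (exprn_normB_le m_gt0 (classC_ge0 (Cx N) j) (classC_ge0 (Cx k) j)) _.
apply: le_lt_trans (coord_le_dC j (Cx N) (Cx k)) _.
exact: le_lt_trans (dx _ _ Nk) (rN N (leqnn N)).
Qed.

Lemma classC_complete (x : nat -> nat -> R) (r : R ^nat) :
  (forall k, classC m n (x k)) -> r @ \oo --> 0 ->
  (forall k l, (k <= l)%N -> dC m n (x k) (x l) <= r k) ->
  exists2 X, classC m n X & forall k, dC m n (x k) X <= r k.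
Proof.
move=> Cx r0 dx; have cvx := cvgn_coord_dC_cauchy Cx r0 dx.
pose X j := limn (fun k => x k j).
have partial_le k N : series (dC_term (x k) X) N <= r k.
  apply: (cvgr_to_le (@cvg_series_pointwise _ (fun l => dC_term (x k) (x l)) _ N _)).
    move=> i; apply: cvgMl_tmp; apply: cvg_norm; apply: cvgB; first exact: cvg_cst.
    exact: continuous_cvg (@exprn_continuous R m (X i)) (cvx i).
  apply: filterS (nbhs_infty_ge k) => l kl.
  exact: le_trans (series_le_dC N (Cx k) (Cx l)) (dx _ _ kl).
have CX : classC m n X.
  apply: (classC_dC_bounded (Cx 0%N) _ _ (partial_le 0%N)) => j.
    by apply: limr_ge (cvx j) _; apply: nearW => k; exact: classC_ge0 (Cx k) j.
  by apply: ler_lim (cvx j.+1) (cvx j) _; apply: nearW => k; exact: classC_nonincr (Cx k) j.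
by exists X => // k; exact: dC_le (partial_le k).
Qed.

End metric.

Section baire.
Context {R : realType}.
Variables m n : nat.
Implicit Types G : set (nat -> R).

(* Inner balls are closed so that the limit of nested balls stays inside. *)
Definition dense_interiorC G : Prop :=
  forall x r, classC m n x -> 0 < r ->
  exists x' rho, [/\ classC m n x', 0 < rho, rho <= r &
    forall z, classC m n z -> dC m n x' z <= rho -> dC m n x z < r /\ G z].

Lemma dense_interiorCS G1 G2 : (forall z, classC m n z -> G1 z -> G2 z) ->
  dense_interiorC G1 -> dense_interiorC G2.
Proof.
move=> G12 G1d x r Cx r0; have [x' [rho [Cx' rho0 rhor H]]] := G1d x r Cx r0.
exists x', rho; split=> // z Cz dz; have [] := H z Cz dz.
by split=> //; exact: G12.
Qed.

Lemma dense_interiorCI G1 G2 :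
  dense_interiorC G1 -> dense_interiorC G2 -> dense_interiorC (G1 `&` G2).
Proof.
move=> G1d G2d x r Cx r0; have [x1 [r1 [Cx1 r10 r1r H1]]] := G1d x r Cx r0.
have [x2 [r2 [Cx2 r20 r2r H2]]] := G2d x1 r1 Cx1 r10.
exists x2, r2; split=> //; first exact: le_trans r2r r1r.
move=> z Cz dz; have [/ltW d1 G2z] := H2 z Cz dz.
by have [? ?] := H1 z Cz d1.
Qed.

Lemma dense_interiorC_bigI (G : nat -> set (nat -> R)) k :
  (forall i, dense_interiorC (G i)) ->
  dense_interiorC [set z | forall i, (i <= k)%N -> G i z].
Proof.
move=> Gd; elim: k => [|k IHk].
  by apply: dense_interiorCS (Gd 0%N) => z _ Gz i; rewrite leqn0 => /eqP ->.
apply: dense_interiorCS (dense_interiorCI IHk (Gd k.+1)) => z _ [Gz Gkz] i.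
by rewrite leq_eqVlt => /predU1P[->|]; last exact: Gz.
Qed.

Lemma dense_interiorC_nowhere_dense F : nowhere_denseC m n F -> dense_interiorC (~` F).
Proof.
move=> [FC intF0] x r Cx r0.
have [y [Cy dxy notclFy]] : exists y, [/\ classC m n y, dC m n x y < r &
    ~ Defs.closureC m n F y].
  apply: contrapT => noy.
  have : Defs.interiorC m n (Defs.closureC m n F) x.
    split=> //; exists r; split=> // y Cy dxy; apply: contrapT => ncl.
    by apply: noy; exists y.
  by rewrite intF0.
have [e [e0 farF]] : exists e, 0 < e /\ forall z, F z -> ~ dC m n y z < e.
  apply: contrapT => noe; apply: notclFy; split=> // e e0.
  apply: contrapT => noz; apply: noe; exists e; split=> // z Fz dz.
  by apply: noz; exists z; split=> //; split=> //; exact: FC.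
have dxy0 := dC_ge0 Cx Cy.
exists y, (Num.min (e / 2) ((r - dC m n x y) / 2)); split=> //.
- by rewrite lt_min; apply/andP; split; lra.
- by rewrite ge_min; apply/orP; right; lra.
move=> z Cz; rewrite le_min => /andP[dz1 dz2]; split.
  by have := dC_triangle Cx Cy Cz; lra.
by move=> Fz; apply: (farF z Fz); lra.
Qed.

Lemma nested_balls (G : nat -> set (nat -> R)) psi e :
  (forall k, dense_interiorC (G k)) -> classC m n psi -> 0 < e ->
  exists x r, [/\ x 0%N = psi, r 0%N = e,
    forall k, classC m n (x k) /\ 0 < r k,
    forall k, r k.+1 <= k.+1%:R^-1 &
    forall k z, classC m n z -> dC m n (x k.+1) z <= r k.+1 ->
      dC m n (x k) z < r k /\ G k z].
Proof.
move=> Gd Cpsi e0.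
have step (kxr : nat * ((nat -> R) * R)) : exists xr' : (nat -> R) * R,
    classC m n kxr.2.1 -> 0 < kxr.2.2 ->
    [/\ classC m n xr'.1, 0 < xr'.2, xr'.2 <= kxr.1.+1%:R^-1 &
      forall z, classC m n z -> dC m n xr'.1 z <= xr'.2 ->
        dC m n kxr.2.1 z < kxr.2.2 /\ G kxr.1 z].
  case: kxr => k [x r] /=.
  have [[Cx r0]|nCr] := pselect (classC m n x /\ 0 < r); last first.
    by exists (x, r) => Cx r0; case: nCr.
  have r'0 : 0 < Num.min r k.+1%:R^-1 by rewrite lt_min r0 invr_gt0 ltr0n.
  have [x' [rho [Cx' rho0 rhor H]]] := Gd k x _ Cx r'0.
  exists (x', rho) => _ _; split=> //=.
    by apply: le_trans rhor _; rewrite ge_min lexx orbT.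
  move=> z Cz dz; have [d Gz] := H z Cz dz; split=> //.
  by apply: lt_le_trans d _; rewrite ge_min lexx.
have [f Hf] := choice step.
pose fix s k := if k is k'.+1 then f (k', s k') else (psi, e).
have sP k : classC m n (s k).1 /\ 0 < (s k).2.
  by elim: k => [//|k [Cx r0]]; have [] := Hf (k, s k) Cx r0.
exists (fun k => (s k).1), (fun k => (s k).2).
by split=> // k; have [Cx r0] := sP k; have [] := Hf (k, s k) Cx r0.
Qed.

Hypothesis m_gt0 : (0 < m)%N.

Lemma dense_interiorC_bigcap (G : nat -> set (nat -> R)) :
  (forall k, dense_interiorC (G k)) -> denseC m n (\bigcap_k G k).
Proof.
move=> Gd psi Cpsi e e0.
have [x [r [x0 r0 Cxr r_le nest]]] := nested_balls Gd Cpsi e0.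
have nest_le k l : (k <= l)%N -> forall z, classC m n z ->
    dC m n (x l) z <= r l -> dC m n (x k) z <= r k.
  move=> /subnK <-; elim: (l - k)%N => [|d IHd] z Cz dz //.
  by apply: (IHd z Cz); apply/ltW; have [] := nest _ z Cz dz.
have dx k l : (k <= l)%N -> dC m n (x k) (x l) <= r k.
  by move=> kl; have [Cx /ltW r0'] := Cxr l; apply: (nest_le _ _ kl _ Cx); rewrite dC_xx.
have r_cvg : r @ \oo --> 0.
  rewrite -cvg_shiftS; apply: (@squeeze_cvgr _ _ _ _ (fun=> 0) harmonic).
  - by apply: nearW => k /=; rewrite (ltW (Cxr k.+1).2) r_le.
  - exact: cvg_cst.
  - exact: cvg_harmonic.
have [X CX dX] := classC_complete m_gt0 (fun k => (Cxr k).1) r_cvg dx.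
exists X; split=> //; last by rewrite -x0 -r0; have [] := nest 0%N X CX (dX 1%N).
by move=> k _; have [] := nest k X CX (dX k.+1).
Qed.

Lemma dense_interiorC_second_category (G : nat -> set (nat -> R)) :
  (forall k, dense_interiorC (G k)) -> second_categoryC m n (\bigcap_k G k).
Proof.
move=> Gd [F [Fnd cover]].
have GFd k : dense_interiorC (G k `&` ~` F k).
  exact: dense_interiorCI (Gd k) (dense_interiorC_nowhere_dense (Fnd k)).
have [X [GFX _]] := dense_interiorC_bigcap GFd (classC0 n m_gt0) ltr01.
have [k _ FkX] := cover X (fun k _ => (GFX k I).1).
exact: (GFX k I).2 FkX.
Qed.

End baire.

Lemma exists_gt_exprn_lt (R : realType) k (D s : R) :
  D ^+ k < s -> exists2 t, D < t & t ^+ k < s.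
Proof.
move=> Ds; have [e /= e0 He] := cvgr_lt _ (@exprn_continuous R k D) _ Ds.
exists (D + e / 2); first by rewrite ltrDl divr_gt0.
apply: He; rewrite /ball_ /= opprD addNKr normrN gtr0_norm ?divr_gt0 //.
by rewrite ltr_pdivrMr // ltr_pMr // ltr1n.
Qed.

Lemma unbounded_infinite (T : choiceType) (f : T -> nat) (S : set T) :
  (forall N, exists2 q, S q & (N <= f q)%N) -> ~ finite_set S.
Proof.
move=> Sunb /finite_fsetP[B SB].
have [q Sq] := Sunb (\max_(p <- finmap.enum_fset B) f p).+1.
have qB : q \in finmap.enum_fset B by move: Sq; rewrite SB.
by rewrite ltnNge (leq_bigmax_seq _ qB).
Qed.

Lemma sum_if_ltn (V : nmodType) (c : V) K N :
  \sum_(0 <= j < N) (if (j < K)%N then c else 0) = c *+ minn N K.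
Proof.
elim: N => [|N IHN]; first by rewrite big_geq // min0n mulr0n.
rewrite big_nat_recr //= IHN; have [NK|KN] := ltnP N K.
  by rewrite (minn_idPl NK) mulrSr.
by rewrite addr0 (minn_idPr (leqW KN)).
Qed.

Section prefix_max.
Context {R : realType}.
Variables m n : nat.
Implicit Types x : nat -> R.

Definition prefix_max K (t : R) x j := if (j < K)%N then Num.max (x j) t else x j.

Lemma normB_exprn_max_le (a t : R) : 0 <= a -> 0 <= t ->
  `|a ^+ m - Num.max a t ^+ m| <= t ^+ m.
Proof.
move=> a0 t0; have [ta|lt_at] := leP t a; first by rewrite subrr normr0 exprn_ge0.
rewrite distrC ger0_norm ?subr_ge0 ?lerXn2r ?nnegrE ?(ltW lt_at) //.
by rewrite gerBl exprn_ge0.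
Qed.

Lemma series_dC_term_prefix_max_le K t x N : (0 < n)%N ->
  (forall j, 0 <= x j) -> 0 <= t ->
  series (dC_term m n x (prefix_max K t x)) N <= K%:R ^+ n * t ^+ m.
Proof.
move=> n_gt0 x0 t0; pose c := K%:R ^+ n.-1 * t ^+ m.
apply: le_trans (_ : \sum_(0 <= j < N) (if (j < K)%N then c else 0) <= _).
  apply: ler_sum => j _; rewrite /dC_term /prefix_max.
  case: ifP => jK; last by rewrite subrr normr0 mulr0.
  apply: ler_pM; rewrite ?weight_ge0 ?normB_exprn_max_le //.
  by rewrite /weight lerXn2r ?nnegrE ?ler_nat.
have -> : K%:R ^+ n * t ^+ m = K%:R * c by rewrite mulrA -exprS prednK.
rewrite sum_if_ltn -[c *+ _]mulr_natl ler_wpM2r ?ler_nat ?geq_minr //.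
by rewrite mulr_ge0 ?exprn_ge0 ?ler0n.
Qed.

Lemma classC_prefix_max K t x : (0 < n)%N -> 0 <= t ->
  classC m n x -> classC m n (prefix_max K t x).
Proof.
move=> n_gt0 t0 Cx; have x0 := classC_ge0 Cx.
apply: (classC_dC_bounded Cx _ _ (fun N => series_dC_term_prefix_max_le K N n_gt0 x0 t0)).
  by move=> j; rewrite /prefix_max; case: ifP; rewrite ?le_max x0.
move=> j; rewrite /prefix_max; have xj := classC_nonincr Cx j.
case: ltnP => [jK|Kj]; first by rewrite (ltnW jK) ge_max !le_max xj lexx orbT.
by case: ltnP => _; rewrite ?le_max xj.
Qed.

Lemma dC_prefix_max_le K t x : (0 < n)%N -> 0 <= t -> classC m n x ->
  dC m n x (prefix_max K t x) <= K%:R ^+ n * t ^+ m.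
Proof.
move=> n_gt0 t0 Cx; apply: dC_le => N.
exact: series_dC_term_prefix_max_le n_gt0 (classC_ge0 Cx) t0.
Qed.

End prefix_max.

Lemma distZ_ge0 (R : realType) m (y : 'cV[R]_m) : 0 <= distZ y.
Proof.
apply: lb_le_inf; first by exists (supnormR (y - map_mx intr 0)), 0.
move=> _ [p ->]; rewrite /supnormR.
by elim/big_ind: _ => // a b a0 b0; rewrite le_max a0.
Qed.

Lemma supnormZ_gt0_neq0 n (q : 'cV[int]_n) : (0 < supnormZ q)%N -> q != 0.
Proof.
apply: contraTneq => ->; rewrite /supnormZ big1 // => i _.
by rewrite mxE.
Qed.

Section approximation.
Context {R : realType}.
Variables (m n : nat) (A : 'M[R]_(m, n)) (g : 'cV[R]_m).

Definition approx_set (N : nat) : set (nat -> R) :=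
  [set psi | exists2 q : 'cV[int]_n,
    (N <= supnormZ q)%N & distZ (Aqg A g q) < psi_at psi (supnormZ q)].

Lemma approx_setS N N' : (N <= N')%N -> approx_set N' `<=` approx_set N.
Proof. by move=> NN' psi [q N'q qpsi]; exists q => //; exact: leq_trans N'q. Qed.

Lemma classCAg_approx_set psi :
  classC m n psi -> (forall N, approx_set N psi) -> classCAg A g psi.
Proof.
move=> Cpsi approx; split=> //; apply: (@unbounded_infinite _ (@supnormZ n)) => N.
have [q Nq qpsi] := approx N.+1; exists q; last exact: ltnW.
by split=> //; apply: supnormZ_gt0_neq0; exact: leq_trans Nq.
Qed.

Lemma not_Bad_small : ~ Bad A g -> forall c N, 0 < c ->
  exists2 q : 'cV[int]_n, (N <= supnormZ q)%N &
    (supnormZ q)%:R ^+ n * distZ (Aqg A g q) ^+ m < c.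
Proof.
move=> nBad c N c0; apply: contrapT => nq; apply: nBad.
exists c; split=> //; exists N => q Nq; rewrite leNgt; apply/negP => qc.
by apply: nq; exists q.
Qed.

Hypotheses (m_gt0 : (0 < m)%N) (n_gt0 : (0 < n)%N).

Lemma dense_interiorC_approx_set N : ~ Bad A g -> dense_interiorC m n (approx_set N).
Proof.
move=> nBad x r Cx r0.
have [q Nq small] := not_Bad_small nBad N.+1 (divr_gt0 r0 (ltr0n _ 2)).
set K := supnormZ q in Nq small *; set D := distZ (Aqg A g q) in small *.
have K0 : 0 < K%:R ^+ n :> R by rewrite exprn_gt0 // ltr0n (leq_trans _ Nq).
have D0 : 0 <= D := distZ_ge0 _.
have [t Dt tsmall] : exists2 t, D < t & t ^+ m < r / 2 / K%:R ^+ n.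
  by apply: exists_gt_exprn_lt; rewrite ltr_pdivlMr // mulrC.
have t0 : 0 <= t := le_trans D0 (ltW Dt).
set phi := prefix_max K t x.
have Cphi : classC m n phi := classC_prefix_max K n_gt0 t0 Cx.
have dxphi : dC m n x phi < r / 2.
  apply: le_lt_trans (dC_prefix_max_le K n_gt0 t0 Cx) _.
  by rewrite mulrC -ltr_pdivlMr.
have gap0 : 0 < t ^+ m - D ^+ m by rewrite subr_gt0 ltrXn2r // -lt0n.
exists phi, (Num.min ((t ^+ m - D ^+ m) / 2) (r / 2)); split=> //.
- by rewrite lt_min !divr_gt0.
- by rewrite ge_min; apply/orP; right; lra.
move=> z Cz; rewrite le_min => /andP[dz_gap dz_r]; split.
  by have := dC_triangle Cx Cphi Cz; lra.
exists q; first exact: ltnW.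
have phiK : t ^+ m <= phi K.-1 ^+ m.
  rewrite lerXn2r ?nnegrE ?(le_trans t0) // /phi /prefix_max prednK ?leqnn;
    by rewrite ?le_max ?lexx ?orbT // (leq_trans _ Nq).
have zK : D ^+ m < z K.-1 ^+ m.
  by have := coord_le_dC K.-1 Cphi Cz; rewrite ler_norml; lra.
rewrite /psi_at ltNge; apply: contraTN zK; rewrite -leNgt => zD.
by rewrite lerXn2r ?nnegrE // (classC_ge0 Cz).
Qed.

End approximation.

Theorem corollary1p4 (R : realType) (m n : nat) (hm : (0 < m)%N) (hn : (0 < n)%N)
  (A : nat -> 'M[R]_(m, n)) (g : nat -> 'cV[R]_m)
  (hA : forall i, unit_mx (A i))
  (hg : forall i k, 0 <= g i k ord0 < 1)
  (hbad : forall i, ~ Bad (A i) (g i)) :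
  let S := [set psi | forall i, classCAg (A i) (g i) psi] in
  second_categoryC m n S /\ denseC m n S.
Proof.
move=> S.
pose U k := [set psi | classC m n psi /\
  forall i, (i <= k)%N -> approx_set (A i) (g i) k psi].
have Ud k : dense_interiorC m n (U k).
  have Ad i : dense_interiorC m n (approx_set (A i) (g i) k).
    exact: dense_interiorC_approx_set hm hn k (hbad i).
  by apply: dense_interiorCS (dense_interiorC_bigI k Ad) => psi Cpsi Upsi.
have US : \bigcap_k U k `<=` S.
  move=> psi Upsi i; apply: classCAg_approx_set (Upsi 0%N I).1 _ => N.
  apply: (approx_setS (leq_maxr i N)).
  exact: (Upsi (maxn i N) I).2 _ (leq_maxl i N).
split.
  apply: contra_not (dense_interiorC_second_category hm Ud) => -[F [Fnd cover]].
  by exists F; split=> //; exact: subset_trans US cover.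
move=> psi Cpsi e e0.
by have [phi [/US Sphi Cphi_dphi]] := dense_interiorC_bigcap hm Ud Cpsi e0; exists phi.
Qed.
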